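(* Let $\tau_i$ be an HC task, let $0\le t_I\le t_E\le t$, and suppose $\tau_i$ switches to HC mode at some time $t_i\in[t_I,t_E]$. Then, as a function of $t_i\in[t_I,t_E]$, $\mathrm{dbf}(\tau_i,t,t_i)$ is maximized when $t_i=t_E$ or $t_i=t_I$; that is, $\mathrm{dbf}(\tau_i,t,t_i)\le\max\{\mathrm{dbf}(\tau_i,t,t_I),\mathrm{dbf}(\tau_i,t,t_E)\}$ for all $t_i\in[t_I,t_E]$.
   Context: $\tau_i=(T_i,HC,\{C_i^L,C_i^H\},D_i)$ is a high-criticality sporadic task with minimum inter-release separation $T_i$, relative deadline $D_i\le T_i$, WCETs $C_i^L<C_i^H$, and tightened deadline $D_i^L\le D_i$. For a time interval $[0,t)$ and mode-switch instant $t_i\le t$, the demand of the job $J_i^A$ (the last job released at or before $t_i$, with release time $r=r(J_i^A)$) is $\mathrm{dbf}(J_i^A,t,t_i)=C_i^L$ if $r+D_i^L<t_i$; $=C_i^H$ if $r+D_i^L\ge t_i$ and $r+D_i\le t$; $=\min\{t_i-r,C_i^L\}$ if $t_i\le r+D_i^L\le t$ and $r+D_i>t$; $=0$ if $r+D_i^L>t$. Define $\mathrm{dbf}_{[b]}(\tau_i,t,t_i)=\lfloor t_i/T_i\rfloor C_i^L+\mathrm{dbf}(J_i^A,t,t_i)$ with $r(J_i^A)=\lfloor t_i/T_i\rfloor T_i$; $\mathrm{dbf}_{[c]}(\tau_i,t,t_i)=b_iC_i^L+\mathrm{dbf}(J_i^A,t,t_i)+a_iC_i^H$, where $s=t-D_i-\lfloor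 (t-D_i)/T_i\rfloor T_i$, $b_i=\lfloor (t_i-s)/T_i\rfloor$, $a_i=\lfloor (t-D_i)/T_i\rfloor-b_i$, and $r(J_i^A)=s+b_iT_i$. Then $\mathrm{dbf}(\tau_i,t,t_i)$ is: $\mathrm{dbf}_{[b]}(\tau_i,t,t_i)$ if $t-t_i<D_i-D_i^L$; $\mathrm{dbf}_{[c]}(\tau_i,t,t_i)$ if $t-t_i\ge D_i$; and $\max\{\mathrm{dbf}_{[b]}(\tau_i,t,t_i),\mathrm{dbf}_{[c]}(\tau_i,t,t_i)\}$ if $D_i-D_i^L\le t-t_i<D_i$. *)

From HB Require Import structures.
From mathcomp Require Import all_boot all_order all_algebra.
From mathcomp Require Import reals.
Set Implicit Arguments. Unset Strict Implicit. Unset Printing Implicit Defensive.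
Import Order.TTheory GRing.Theory Num.Theory.
Local Open Scope ring_scope.

(* A high-criticality sporadic task tau_i = (T_i, HC, {C_i^L, C_i^H}, D_i)
   together with its tightened (virtual) deadline D_i^L. *)
Record hc_task (R : realType) := HCTask {
  T_ : R;
  CL : R;
  CH : R;
  D_ : R;
  DL : R
}.

Definition valid_hc_task (R : realType) (tk : hc_task R) : Prop :=
  0 < T_ tk /\ 0 < CL tk /\ CL tk < CH tk /\ 0 < DL tk /\
  DL tk <= D_ tk /\ D_ tk <= T_ tk.

Definition rfloor (R : realType) (x : R) : R := (Num.floor x)%:~R.

(* dbf(J_i^A, t, t_i) for the carry-over job released at r *)
Definition dbf_job (R : realType) (tk : hc_task R) (r t ti : R) : R :=
  if r + DL tk < ti then CL tk
  else if r + D_ tk <= t then CH tk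
  else if r + DL tk <= t then Num.min (ti - r) (CL tk)
  else 0.

Definition dbf_b (R : realType) (tk : hc_task R) (t ti : R) : R :=
  let k := rfloor (ti / T_ tk) in
  k * CL tk + dbf_job tk (k * T_ tk) t ti.

Definition dbf_c (R : realType) (tk : hc_task R) (t ti : R) : R :=
  let n := rfloor ((t - D_ tk) / T_ tk) in
  let s := t - D_ tk - n * T_ tk in
  let b := rfloor ((ti - s) / T_ tk) in
  let a := n - b in
  b * CL tk + dbf_job tk (s + b * T_ tk) t ti + a * CH tk.

Definition dbf (R : realType) (tk : hc_task R) (t ti : R) : R :=
  if t - ti < D_ tk - DL tk then dbf_b tk t ti
  else if D_ tk <= t - ti then dbf_c tk t ti
  else Num.max (dbf_b tk t ti) (dbf_c tk t ti).

From HB Require Import structures.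
From mathcomp Require Import all_boot all_order all_algebra.
From mathcomp Require Import reals.
From mathcomp Require Import lra.
Set Implicit Arguments. Unset Strict Implicit. Unset Printing Implicit Defensive.
Import Order.TTheory GRing.Theory Num.Theory.
Local Open Scope ring_scope.

(* Of the two branches of dbf, dbf_c is nonincreasing in the switch time t_i, and
   whenever it is active at t_i (t - t_i >= D_i - D_i^L) it is also active at t_I; so
   it is bounded by dbf(t_I). The branch dbf_b is nondecreasing in t_i, and active at
   t_E whenever it is active at t_i, except for one term: the HI-mode demand C_i^H of
   a carry-over job with deadline within t whose virtual deadline has not passed at
   t_i. That situation places t_i in the window (t - D_i, t - D_i + D_i^L], where
   dbf_c charges the same C_i^H and at least as many earlier LO jobs, so dbf_b is
   then dominated by dbf_c, hence again by dbf(t_I). *)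

Lemma ler_staircase (R : numDomainType) (k1 k2 : int) (A u1 u2 : R) :
  0 <= A -> k1 <= k2 -> (k1 = k2 -> u1 <= u2) -> (k1 < k2 -> u1 <= A + u2) ->
  k1%:~R * A + u1 <= k2%:~R * A + u2.
Proof.
move=> A_ge0; rewrite le_eqVlt => /orP[/eqP-> /(_ erefl)|k12 _ /(_ k12) u12].
  by rewrite lerD2l.
apply: le_trans (_ : _ <= k1%:~R * A + (A + u2)) _; first by rewrite lerD2l.
rewrite addrA lerD2r -[X in _ + X]mul1r -mulrDl -[1]/(1%:~R) -intrD.
by rewrite ler_wpM2r // ler_int lezD1.
Qed.

Section FloorDiv.
Variables (R : archiRealFieldType) (T : R).
Hypothesis T_gt0 : 0 < T.

Lemma floor_divr_ge_int (x : R) (m : int) :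
  (m <= Num.floor (x / T)) = (m%:~R * T <= x).
Proof. by rewrite floor_ge_int ler_pdivlMr. Qed.

Lemma floor_divr_le_int (x : R) (m : int) :
  (Num.floor (x / T) <= m) = (x < m%:~R * T + T).
Proof.
by rewrite -ltzD1 floor_lt_int ltr_pdivrMr // intrD mulrDl mul1r.
Qed.

Lemma floor_divr_itv (x : R) :
  (Num.floor (x / T))%:~R * T <= x < (Num.floor (x / T))%:~R * T + T.
Proof. by rewrite -floor_divr_ge_int -floor_divr_le_int lexx. Qed.

End FloorDiv.

Section HCTask.
Variables (R : realType) (tk : hc_task R).
Hypothesis tk_valid : valid_hc_task tk.

Local Notation T := (T_ tk).
Local Notation D := (D_ tk).
Local Notation DL := (DL tk).
Local Notation CL := (CL tk).
Local Notation CH := (CH tk).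

Let T_gt0 : 0 < T. Proof. by case: tk_valid. Qed.
Let CL_gt0 : 0 < CL. Proof. by case: tk_valid => _ []. Qed.
Let CL_lt_CH : CL < CH. Proof. by case: tk_valid => _ [_ []]. Qed.
Let DL_gt0 : 0 < DL. Proof. by case: tk_valid => _ [_ [_ []]]. Qed.
Let D_le_T : D <= T. Proof. by case: tk_valid => _ [_ [_ [_ []]]]. Qed.

Definition dbf_job_lo (r t x : R) : R :=
  if r + DL < x then CL
  else if r + DL <= t then Num.min (x - r) CL
  else 0.

Definition dbf_b_lo (t x : R) : R :=
  let k := rfloor (x / T) in k * CL + dbf_job_lo (k * T) t x.

Lemma dbf_job_lo_ge0 (r t x : R) : r <= x -> 0 <= dbf_job_lo r t x.
Proof.
move=> rx; rewrite /dbf_job_lo; case: ifP => _; first exact: ltW.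
by case: ifP => // _; rewrite le_min subr_ge0 rx ltW.
Qed.

Lemma dbf_job_lo_le_CL (r t x : R) : dbf_job_lo r t x <= CL.
Proof.
rewrite /dbf_job_lo; case: ifP => // _.
by case: ifP => _; [rewrite ge_min lexx orbT | exact: ltW].
Qed.

Lemma dbf_job_lo_nondecreasing (r t x y : R) :
  r <= x -> x <= y -> dbf_job_lo r t x <= dbf_job_lo r t y.
Proof.
move=> rx xy; rewrite {1}/dbf_job_lo.
case: ifP => [lt_x|_]; first by rewrite /dbf_job_lo (lt_le_trans lt_x xy).
case: ifP => [DLt|_]; last exact: dbf_job_lo_ge0 (le_trans rx xy).
rewrite /dbf_job_lo DLt; case: ifP => _; first by rewrite ge_min lexx orbT.
by rewrite le_min !ge_min lexx lerD2r xy orbT.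
Qed.

Lemma dbf_job_lo_le (r t x : R) : dbf_job_lo r t x <= dbf_job tk r t x.
Proof.
rewrite /dbf_job_lo /dbf_job; case: ifP => // _.
case: (r + D <= t); last exact: lexx.
apply: le_trans (ltW CL_lt_CH).
by case: ifP => _; [rewrite ge_min lexx orbT | exact: ltW].
Qed.

Lemma dbf_job_loE (r t x : R) :
  ~~ ((r + D <= t) && (x <= r + DL)) -> dbf_job tk r t x = dbf_job_lo r t x.
Proof.
rewrite /dbf_job /dbf_job_lo; case: ifP => // /negbT; rewrite -leNgt => ->.
by rewrite andbT => /negbTE->.
Qed.

Lemma dbf_job_CH (r t x : R) : r + D <= t -> x <= r + DL -> dbf_job tk r t x = CH.
Proof. by move=> rD xDL; rewrite /dbf_job ltNge xDL rD. Qed.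

Lemma dbf_job_le_CH (r t x : R) : dbf_job tk r t x <= CH.
Proof.
rewrite /dbf_job; case: ifP => _; first exact: ltW.
case: ifP => // _; case: ifP => _; first by rewrite ge_min (ltW CL_lt_CH) orbT.
exact: ltW (lt_trans CL_gt0 CL_lt_CH).
Qed.

Lemma dbf_job_ge_CL (r t x : R) : r + D <= t -> CL <= dbf_job tk r t x.
Proof. by move=> rD; rewrite /dbf_job rD; case: ifP => // _; exact: ltW. Qed.

Lemma dbf_job_nonincreasing (r t x y : R) :
  r + D <= t -> x <= y -> dbf_job tk r t y <= dbf_job tk r t x.
Proof.
move=> rD xy; have [lt_x|le_x] := ltP (r + DL) x.
  by rewrite /dbf_job lt_x (lt_le_trans lt_x xy).
by rewrite (dbf_job_CH rD le_x) dbf_job_le_CH.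
Qed.

Lemma dbf_b_lo_nondecreasing (t x y : R) : x <= y -> dbf_b_lo t x <= dbf_b_lo t y.
Proof.
move=> xy; rewrite /dbf_b_lo /rfloor.
have /andP[rx _] := floor_divr_itv T_gt0 x.
apply: ler_staircase; first exact: ltW.
- by rewrite le_floor // ler_pM2r ?invr_gt0.
- by move=> kxy; rewrite -kxy; exact: dbf_job_lo_nondecreasing.
- move=> _; apply: le_trans (dbf_job_lo_le_CL _ _ _) _.
  have /andP[ry _] := floor_divr_itv T_gt0 y.
  by rewrite lerDl dbf_job_lo_ge0.
Qed.

Lemma dbf_b_lo_le_dbf_b (t x : R) : dbf_b_lo t x <= dbf_b tk t x.
Proof. by rewrite /dbf_b_lo /dbf_b lerD2l dbf_job_lo_le. Qed.

Lemma dbf_c_nonincreasing (t x y : R) : x <= y -> x < t -> dbf_c tk t y <= dbf_c tk t x.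
Proof.
move=> xy xt; rewrite /dbf_c /rfloor.
set n := Num.floor ((t - D) / T); set s := t - D - n%:~R * T.
set bx := Num.floor ((x - s) / T); set b_y := Num.floor ((y - s) / T).
have bxn : bx <= n by rewrite floor_divr_le_int // /s; have := D_le_T; lra.
have rxD : s + bx%:~R * T + D <= t.
  have : bx%:~R * T <= n%:~R * T by rewrite ler_pM2r // ler_int.
  rewrite /s; lra.
(* Up to the constant n C^H, dbf_c t x = J_x - b_x (C^H - C^L), where J_x is the
   carry-over demand: a staircase with step C^H - C^L. *)
suff : bx%:~R * (CH - CL) + dbf_job tk (s + b_y%:~R * T) t y <=
       b_y%:~R * (CH - CL) + dbf_job tk (s + bx%:~R * T) t x by lra.
apply: ler_staircase.
- by rewrite subr_ge0 ltW.
- by rewrite le_floor // ler_pM2r ?invr_gt0 // lerD2r.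
- by move=> bxy; rewrite -bxy; exact: dbf_job_nonincreasing.
- move=> _; have := dbf_job_le_CH (s + b_y%:~R * T) t y.
  have := dbf_job_ge_CL x rxD; lra.
Qed.

Lemma dbf_c_windowE (t x : R) : t - D < x -> x < t -> x <= t - D + DL ->
  dbf_c tk t x = rfloor ((t - D) / T) * CL + CH.
Proof.
move=> Dx xt xDL; rewrite /dbf_c /rfloor.
set n := Num.floor ((t - D) / T); set s := t - D - n%:~R * T.
have -> : Num.floor ((x - s) / T) = n.
  apply/eqP; rewrite eq_le floor_divr_le_int // floor_divr_ge_int // /s.
  by apply/andP; split; have := D_le_T; lra.
by rewrite dbf_job_CH /s ?subrr ?mul0r ?addr0 //; lra.
Qed.

Lemma dbf_b_lo_or_le_dbf_c (t x : R) : t - D < x -> x < t ->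
  dbf_b tk t x = dbf_b_lo t x \/ (D - DL <= t - x /\ dbf_b tk t x <= dbf_c tk t x).
Proof.
move=> Dx xt; rewrite /dbf_b /dbf_b_lo.
set k := rfloor (x / T).
have [/andP[kD xDL]|lo] := boolP ((k * T + D <= t) && (x <= k * T + DL)).
  right; split; first lra.
  rewrite dbf_job_CH // dbf_c_windowE; try lra.
  rewrite lerD2r ler_wpM2r ?(ltW CL_gt0) // /k /rfloor ler_int.
  by rewrite floor_divr_ge_int //; lra.
by left; rewrite dbf_job_loE.
Qed.

Lemma dbf_b_le_dbf (t x : R) : t - x < D -> dbf_b tk t x <= dbf tk t x.
Proof.
move=> bD; rewrite /dbf; case: ifP => _; first exact: lexx.
by rewrite (leNgt D) bD /= le_max lexx.
Qed.

Lemma dbf_c_le_dbf (t x : R) : D - DL <= t - x -> dbf_c tk t x <= dbf tk t x.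
Proof.
by move=> cD; rewrite /dbf ltNge cD /=; case: ifP => _; rewrite ?le_max lexx ?orbT.
Qed.

Lemma dbf_le_of_branches (t x M : R) :
  (t - x < D -> dbf_b tk t x <= M) -> (D - DL <= t - x -> dbf_c tk t x <= M) ->
  dbf tk t x <= M.
Proof.
move=> b_le c_le; rewrite /dbf; case: ifP => [bDL|/negbT].
  by apply: b_le; have := DL_gt0; lra.
rewrite -leNgt => cD; case: ifP => [_|/negbT]; first exact: c_le.
by rewrite -ltNge => bD; rewrite ge_max b_le ?c_le.
Qed.
End HCTask.

Theorem lemma5 (R : realType) (tk : hc_task R) (tI tE t ti : R) :
  valid_hc_task tk ->
  0 <= tI -> tI <= tE -> tE <= t ->
  tI <= ti -> ti <= tE ->
  dbf tk t ti <= Num.max (dbf tk t tI) (dbf tk t tE).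
Proof.
move=> valid _ IE Et Ii iE.
have [->|ne_iE] := eqVneq ti tE; first by rewrite le_max lexx orbT.
have lt_iE : ti < tE by rewrite lt_neqAle ne_iE.
have lt_it : ti < t := lt_le_trans lt_iE Et.
set M := Num.max _ _.
have c_le : D_ tk - DL tk <= t - ti -> dbf_c tk t ti <= M.
  move=> cD; apply: le_trans (dbf_c_nonincreasing valid Ii (le_lt_trans Ii lt_it)) _.
  by rewrite le_max dbf_c_le_dbf //; lra.
apply: (dbf_le_of_branches valid) => // bD.
have Dti : t - D_ tk < ti by lra.
have [->|[/c_le c_M b_c]] := dbf_b_lo_or_le_dbf_c valid Dti lt_it;
  last exact: le_trans b_c c_M.
apply: le_trans (dbf_b_lo_nondecreasing valid t (ltW lt_iE)) _.
apply: le_trans (dbf_b_lo_le_dbf_b valid t tE) _.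
by rewrite le_max dbf_b_le_dbf ?orbT //; lra.
Qed.
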